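(* Fix $n\ge 1$ and a formula $\varphi$ of NM logic in the variables $x_1,\dots,x_n$. Let $O(\varphi,n)$ be the set of assignments $\mu$ of the variables $x_1,\dots,x_n$ to values in $\{0,\tfrac12,1\}$ (extended to all formulas by evaluation in the three-element NM chain $\{0,\tfrac12,1\}$) such that $\mu(\varphi)=1$. Then there is a bijection between $O(\varphi,n)$ and the set of minimal idempotent join-irreducible elements $g\in\mathcal{NM}_n$ such that $g\le[\varphi]_\equiv$.
   Context: An NM algebra is an algebra $\langle A,\wedge,\vee,\odot,\to,\bot,\top\rangle$ such that $(A,\wedge,\vee,\bot,\top)$ is a bounded lattice, $\langle A,\odot,\top\rangle$ is a commutative monoid, and for all $x,y,z$: $x\odot y\le z$ iff $x\le y\to z$; $(x\to y)\vee(y\to x)=\top$; $\neg(x\odot y)\vee((x\wedge y)\to(x\odot y))=\top$ where $\neg x:=x\to\bot$; and $\neg\neg x=x$. The standard NM algebra is $[0,1]$ with $\wedge=\min$, $\vee=\max$, $x\odot y=\min(x,y)$ if $x+y>1$ and $0$ otherwise, $x\to y=1$ if $x\le y$ and $\max(1-x,y)$ otherwise; $\{0,\tfrac12,1\}$ is a subalgebra (the three-element NM chain). Formulas of NM logic are built from variables, $\bot$, and the connectives $\odot,\wedge,\to$ (with derived $\vee,\neg,\leftrightarrow$). $\mathcal{NM}_n$ is the free NM algebra on $n$ generators, i.e. the Lindenbaum algebra of formulas in $x_1,\dots,x_n$ modulo logical equivalence $\equiv$ (validity of $\varphi\leftrightarrow\psi$ in all NM algebras); $[\varphi]_\equiv$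 is the class of $\varphi$. It is a finite distributive lattice. An element is join-irreducible if it is not $\bot$ and $x=y\vee z$ implies $x=y$ or $x=z$; it is idempotent if $g\odot g=g$; a minimal idempotent join-irreducible element is one minimal among idempotent join-irreducible elements. *)

From HB Require Import structures.
From mathcomp Require Import all_boot all_order all_algebra.
Set Implicit Arguments. Unset Strict Implicit. Unset Printing Implicit Defensive.
Import Order.TTheory GRing.Theory Num.Theory.

Record NMAlgebra := {
  nm_car :> Type;
  nm_meet : nm_car -> nm_car -> nm_car;
  nm_join : nm_car -> nm_car -> nm_car;
  nm_conj : nm_car -> nm_car -> nm_car;
  nm_imp  : nm_car -> nm_car -> nm_car;
  nm_bot : nm_car;
  nm_top : nm_car;
  nm_meetA : forall x y z, nm_meet x (nm_meet y z) = nm_meet (nm_meet x y) z;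
  nm_joinA : forall x y z, nm_join x (nm_join y z) = nm_join (nm_join x y) z;
  nm_meetC : forall x y, nm_meet x y = nm_meet y x;
  nm_joinC : forall x y, nm_join x y = nm_join y x;
  nm_meetJ : forall x y, nm_meet x (nm_join x y) = x;
  nm_joinM : forall x y, nm_join x (nm_meet x y) = x;
  nm_bot_le : forall x, nm_meet nm_bot x = nm_bot;
  nm_le_top : forall x, nm_meet x nm_top = x;
  nm_conjA : forall x y z, nm_conj x (nm_conj y z) = nm_conj (nm_conj x y) z;
  nm_conjC : forall x y, nm_conj x y = nm_conj y x;
  nm_conj1 : forall x, nm_conj x nm_top = x;
  nm_resid : forall x y z,
      nm_meet (nm_conj x y) z = nm_conj x y <-> nm_meet x (nm_imp y z) = x;
  nm_prelin : forall x y, nm_join (nm_imp x y) (nm_imp y x) = nm_top;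
  nm_nm : forall x y,
      nm_join (nm_imp (nm_conj x y) nm_bot)
              (nm_imp (nm_meet x y) (nm_conj x y)) = nm_top;
  nm_invol : forall x, nm_imp (nm_imp x nm_bot) nm_bot = x
}.

Inductive nmform (n : nat) : Type :=
| FVar of 'I_n
| FBot
| FConj of nmform n & nmform n
| FMeet of nmform n & nmform n
| FImp of nmform n & nmform n.
Arguments FBot {n}.

Definition FNeg n (a : nmform n) := FImp a FBot.
Definition FJoin n (a b : nmform n) :=
  FMeet (FImp (FImp a b) b) (FImp (FImp b a) a).
Definition FIff n (a b : nmform n) := FMeet (FImp a b) (FImp b a).

Fixpoint evalA (A : NMAlgebra) n (v : 'I_n -> A) (f : nmform n) : A :=
  match f with
  | FVar i => v i
  | FBot => nm_bot A
  | FConj a b => nm_conj (evalA v a) (evalA v b)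
  | FMeet a b => nm_meet (evalA v a) (evalA v b)
  | FImp a b => nm_imp (evalA v a) (evalA v b)
  end.

Definition fequiv n (a b : nmform n) : Prop :=
  forall (A : NMAlgebra) (v : 'I_n -> A), evalA v (FIff a b) = nm_top A.

(* ---------- order and notions in the free algebra NM_n = nmform n / fequiv ---------- *)
Definition fle n (a b : nmform n) : Prop := fequiv (FMeet a b) a.

Definition join_irreducible n (g : nmform n) : Prop :=
  ~ fequiv g FBot /\
  forall b c : nmform n, fequiv g (FJoin b c) -> fequiv g b \/ fequiv g c.

Definition idempotent n (g : nmform n) : Prop := fequiv (FConj g g) g.

Definition idem_ji n (g : nmform n) : Prop := idempotent g /\ join_irreducible g.

Definition min_idem_ji n (g : nmform n) : Prop :=
  idem_ji g /\ forall h : nmform n, idem_ji h -> fle h g -> fequiv h g.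

(* ---------- the three-element NM chain {0,1/2,1} inside standard NM on rat ---------- *)
Local Open Scope ring_scope.
Definition std_conj (x y : rat) : rat := if 1 < x + y then Num.min x y else 0.
Definition std_imp (x y : rat) : rat := if x <= y then 1 else Num.max (1 - x) y.

Fixpoint eval3 n (v : 'I_n -> rat) (f : nmform n) : rat :=
  match f with
  | FVar i => v i
  | FBot => 0
  | FConj a b => std_conj (eval3 v a) (eval3 v b)
  | FMeet a b => Num.min (eval3 v a) (eval3 v b)
  | FImp a b => std_imp (eval3 v a) (eval3 v b)
  end.

Definition val3 (k : 'I_3) : rat := (k%:R) / 2.

Definition assign n := {ffun 'I_n -> 'I_3}.

Definition O_set n (phi : nmform n) : {set assign n} :=
  [set mu : assign n | eval3 (fun i => val3 (mu i)) phi == 1].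

From Pilot Require Import Defs.
From mathcomp Require Import all_boot all_order all_algebra lra.
From Stdlib Require Import Classical.
Set Implicit Arguments. Unset Strict Implicit. Unset Printing Implicit Defensive.

(* For a point ν ∈ {0,½,1}ⁿ let χ_ν be the product over i of the squares x_i², (¬x_i)² or
   (x_i ↔ ¬x_i)², according as ν(x_i) is 1, 0 or ½.  In an NM algebra every square is
   idempotent, so χ_ν denotes an idempotent e, and the localization x ↦ e ⊙ x is compatible
   with ⊙, ⊓ and ⇒.  After localization every variable, hence every formula ψ, behaves like its
   value ν(ψ) in the three-element chain; in particular χ_ν ≤ ψ whenever ν(ψ) = 1.  The χ_ν
   cover ⊤, so a nonzero idempotent g has a point ν with ν(g) = 1, i.e. χ_ν ≤ g.  Evaluating in
   the three-element chain at ν then shows that χ_ν is join irreducible and minimal, and that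
   ν ↦ [χ_ν] is injective; it is the required bijection. *)

Notation "x ⊓ y" := (nm_meet x y) (at level 40, left associativity).
Notation "x ⊔ y" := (nm_join x y) (at level 50, left associativity).
Notation "x ⊙ y" := (nm_conj x y) (at level 40, left associativity).
Notation "x ⇒ y" := (nm_imp x y) (at level 55, right associativity).

Definition nm_le (A : NMAlgebra) (x y : A) := x ⊓ y = x.
Definition nm_neg (A : NMAlgebra) (x : A) := x ⇒ nm_bot A.
Definition nm_idem (A : NMAlgebra) (e : A) := e ⊙ e = e.
Notation "x ⊑ y" := (nm_le x y) (at level 70, no associativity).
Notation "¬ x" := (nm_neg x) (at level 35, right associativity).

Section NMAlgebraTheory.
Variable A : NMAlgebra.
Local Notation "⊥" := (nm_bot A).
Local Notation "⊤" := (nm_top A).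
Implicit Types x y z : A.

Lemma nm_meetxx x : x ⊓ x = x.
Proof. by rewrite -{2}(nm_joinM x x) nm_meetJ. Qed.

Lemma nm_lexx x : x ⊑ x. Proof. exact: nm_meetxx. Qed.

Lemma nm_le_trans x y z : x ⊑ y -> y ⊑ z -> x ⊑ z.
Proof. by rewrite /nm_le => h1 h2; rewrite -h1 -nm_meetA h2. Qed.

Lemma nm_le_anti x y : x ⊑ y -> y ⊑ x -> x = y.
Proof. by rewrite /nm_le => h1 h2; rewrite -h1 nm_meetC h2. Qed.

Lemma nm_le_ext x y : (forall z, z ⊑ x <-> z ⊑ y) -> x = y.
Proof. by move=> h; apply: nm_le_anti; apply/h; apply: nm_lexx. Qed.

Lemma nm_le_meetl x y : x ⊓ y ⊑ x.
Proof. by rewrite /nm_le nm_meetC nm_meetA nm_meetxx. Qed.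

Lemma nm_le_meetr x y : x ⊓ y ⊑ y.
Proof. by rewrite nm_meetC; apply: nm_le_meetl. Qed.

Lemma nm_lexI z x y : z ⊑ x ⊓ y <-> z ⊑ x /\ z ⊑ y.
Proof.
split => [h | [h1 h2]]; last by rewrite /nm_le nm_meetA h1 h2.
by split; apply: nm_le_trans h _; [apply: nm_le_meetl | apply: nm_le_meetr].
Qed.

Lemma nm_le_joinl x y : x ⊑ x ⊔ y. Proof. exact: nm_meetJ. Qed.

Lemma nm_le_joinr x y : y ⊑ x ⊔ y. Proof. by rewrite nm_joinC; apply: nm_le_joinl. Qed.

Lemma nm_joinE x y : x ⊑ y <-> x ⊔ y = y.
Proof.
split => h; last by rewrite /nm_le -h nm_meetJ.
by rewrite -{1}h nm_joinC nm_meetC nm_joinM.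
Qed.

Lemma nm_leUx x y z : x ⊑ z -> y ⊑ z -> x ⊔ y ⊑ z.
Proof. by move=> /nm_joinE h1 /nm_joinE h2; apply/nm_joinE; rewrite -nm_joinA h2 h1. Qed.

Lemma nm_le0x x : ⊥ ⊑ x. Proof. exact: nm_bot_le. Qed.

Lemma nm_lex1 x : x ⊑ ⊤. Proof. exact: nm_le_top. Qed.

Lemma nm_1le x : ⊤ ⊑ x -> x = ⊤.
Proof. exact: nm_le_anti (nm_lex1 x). Qed.

Lemma nm_meet1l x : ⊤ ⊓ x = x. Proof. by rewrite nm_meetC nm_le_top. Qed.
Lemma nm_meet0r x : x ⊓ ⊥ = ⊥. Proof. by rewrite nm_meetC nm_bot_le. Qed.

Lemma nm_residP x y z : x ⊙ y ⊑ z <-> x ⊑ y ⇒ z.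
Proof. exact: nm_resid. Qed.

Lemma nm_conj1l x : ⊤ ⊙ x = x. Proof. by rewrite nm_conjC nm_conj1. Qed.

Lemma nm_conjACA x y z w : (x ⊙ y) ⊙ (z ⊙ w) = (x ⊙ z) ⊙ (y ⊙ w).
Proof. by rewrite -!nm_conjA (nm_conjA y z w) (nm_conjC y z) -nm_conjA. Qed.

Lemma nm_conj_monol x y z : x ⊑ y -> x ⊙ z ⊑ y ⊙ z.
Proof.
move=> h; apply/nm_residP; apply: nm_le_trans h _.
by apply/nm_residP; apply: nm_lexx.
Qed.

Lemma nm_conj_monor x y z : x ⊑ y -> z ⊙ x ⊑ z ⊙ y.
Proof. by rewrite !(nm_conjC z); apply: nm_conj_monol. Qed.

Lemma nm_conj_mono x1 y1 x2 y2 : x1 ⊑ y1 -> x2 ⊑ y2 -> x1 ⊙ x2 ⊑ y1 ⊙ y2.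
Proof.
by move=> h1 h2; apply: nm_le_trans (nm_conj_monol _ h1) _; apply: nm_conj_monor.
Qed.

Lemma nm_conj_lel x y : x ⊙ y ⊑ x.
Proof. by have := nm_conj_monor x (nm_lex1 y); rewrite nm_conj1. Qed.

Lemma nm_conj_ler x y : x ⊙ y ⊑ y.
Proof. by rewrite nm_conjC; apply: nm_conj_lel. Qed.

Lemma nm_modus_ponens x y : x ⊙ (x ⇒ y) ⊑ y.
Proof. by rewrite nm_conjC; apply/nm_residP; apply: nm_lexx. Qed.

Lemma nm_imp_monor x y z : y ⊑ z -> x ⇒ y ⊑ x ⇒ z.
Proof.
move=> h; apply/nm_residP; apply: nm_le_trans h.
by rewrite nm_conjC; apply: nm_modus_ponens.
Qed.

Lemma nm_imp_eq1 x y : x ⇒ y = ⊤ <-> x ⊑ y.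
Proof.
split=> [h | h].
  have : ⊤ ⊑ x ⇒ y by rewrite h; apply: nm_lexx.
  by move/nm_residP; rewrite nm_conj1l.
by apply: nm_1le; apply/nm_residP; rewrite nm_conj1l.
Qed.

Lemma nm_impxx x : x ⇒ x = ⊤. Proof. by apply/nm_imp_eq1; apply: nm_lexx. Qed.
Lemma nm_imp0l x : ⊥ ⇒ x = ⊤. Proof. by apply/nm_imp_eq1; apply: nm_le0x. Qed.
Lemma nm_imp1r x : x ⇒ ⊤ = ⊤. Proof. by apply/nm_imp_eq1; apply: nm_lex1. Qed.

Lemma nm_imp1l x : ⊤ ⇒ x = x.
Proof.
by apply: nm_le_ext => z; rewrite -nm_residP nm_conj1; split.
Qed.

Lemma nm_imp_curry x y z : x ⇒ y ⇒ z = x ⊙ y ⇒ z.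
Proof.
apply: nm_le_ext => w.
by rewrite -!nm_residP nm_conjA; split.
Qed.

Lemma nm_iff_eq1 x y : (x ⇒ y) ⊓ (y ⇒ x) = ⊤ <-> x = y.
Proof.
split=> [h | <-]; last by rewrite nm_impxx nm_meetxx.
have /nm_lexI [/nm_1le/nm_imp_eq1 h1 /nm_1le/nm_imp_eq1 h2] : ⊤ ⊑ (x ⇒ y) ⊓ (y ⇒ x).
  by rewrite h; apply: nm_lexx.
exact: nm_le_anti.
Qed.

Lemma nm_le_impjoin x y : x ⊑ ((x ⇒ y) ⇒ y) ⊓ ((y ⇒ x) ⇒ x).
Proof.
by apply/nm_lexI; split; apply/nm_residP; [apply: nm_modus_ponens | apply: nm_conj_lel].
Qed.

Lemma nm_conj0 x : x ⊙ ⊥ = ⊥.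
Proof. by apply: nm_le_anti _ (nm_le0x _); apply/nm_residP; rewrite nm_imp0l; apply: nm_lex1. Qed.

Lemma nm_conj0l x : ⊥ ⊙ x = ⊥. Proof. by rewrite nm_conjC nm_conj0. Qed.

Lemma nm_le_neg x y : x ⊑ ¬ y <-> x ⊙ y = ⊥.
Proof.
split=> [/nm_residP h | h]; first exact: nm_le_anti h (nm_le0x _).
by apply/nm_residP; rewrite h; apply: nm_lexx.
Qed.

Lemma nm_conjN x : x ⊙ ¬ x = ⊥.
Proof. exact: nm_le_anti (nm_modus_ponens _ _) (nm_le0x _). Qed.

Lemma nm_negK x : ¬ ¬ x = x. Proof. exact: nm_invol. Qed.

Lemma nm_contra x y : x ⇒ y = ¬ y ⇒ ¬ x.
Proof. by rewrite /nm_neg !nm_imp_curry nm_conjC -{1}(nm_negK y) /nm_neg nm_imp_curry. Qed.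

Lemma nm_conjDr x y z : x ⊙ (y ⊔ z) = x ⊙ y ⊔ x ⊙ z.
Proof.
apply: nm_le_anti.
  rewrite nm_conjC; apply/nm_residP; apply: nm_leUx; apply/nm_residP; rewrite nm_conjC.
    exact: nm_le_joinl.
  exact: nm_le_joinr.
by apply: nm_leUx; apply: nm_conj_monor; [apply: nm_le_joinl | apply: nm_le_joinr].
Qed.

Lemma nm_conjIr x y z : x ⊙ (y ⊓ z) = (x ⊙ y) ⊓ (x ⊙ z).
Proof.
apply: nm_le_anti.
  by apply/nm_lexI; split; apply: nm_conj_monor; [apply: nm_le_meetl | apply: nm_le_meetr].
set w := (x ⊙ y) ⊓ (x ⊙ z).
rewrite -(nm_conj1 w) -(nm_prelin y z) nm_conjDr; apply: nm_leUx.
  apply: nm_le_trans (nm_conj_monol _ (nm_le_meetl _ _)) _; rewrite -nm_conjA.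
  by apply: nm_conj_monor; apply/nm_lexI; split; [apply: nm_conj_lel | apply: nm_modus_ponens].
apply: nm_le_trans (nm_conj_monol _ (nm_le_meetr _ _)) _; rewrite -nm_conjA.
by apply: nm_conj_monor; apply/nm_lexI; split; [apply: nm_modus_ponens | apply: nm_conj_lel].
Qed.

(* The only use of the NM axiom: it makes squares idempotent. *)
Lemma nm_sq_cube x : x ⊙ x = x ⊙ x ⊙ x.
Proof.
apply: nm_le_anti; last exact: nm_conj_lel.
rewrite -{1}(nm_conj1 (x ⊙ x)) -(nm_nm x x) nm_meetxx nm_conjDr; apply: nm_leUx.
  exact: nm_le_trans (nm_modus_ponens _ _) (nm_le0x _).
by rewrite -nm_conjA [x ⊙ x ⊙ x]nm_conjC; apply: nm_conj_monor; apply: nm_modus_ponens.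
Qed.

Lemma nm_idem_sq x : nm_idem (x ⊙ x).
Proof. by rewrite /nm_idem nm_conjA -!nm_sq_cube. Qed.

Lemma nm_idem1 : nm_idem ⊤. Proof. exact: nm_conj1. Qed.

Lemma nm_idem_conj x y : nm_idem x -> nm_idem y -> nm_idem (x ⊙ y).
Proof. by rewrite /nm_idem nm_conjACA => -> ->. Qed.

Lemma nm_idem_leP e x : nm_idem e -> e ⊑ x <-> e ⊙ x = e.
Proof.
move=> he; split=> [h | <-]; last exact: nm_conj_ler.
by apply: nm_le_anti (nm_conj_lel _ _) _; rewrite -{1}he; apply: nm_conj_monor.
Qed.

End NMAlgebraTheory.

Inductive three := zero3 | half3 | one3.

Definition conj3 (x y : three) : three :=
  match x, y with one3, y => y | x, one3 => x | _, _ => zero3 end.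
Definition meet3 (x y : three) : three :=
  match x, y with
  | zero3, _ | _, zero3 => zero3
  | half3, _ | _, half3 => half3
  | _, _ => one3
  end.
Definition join3 (x y : three) : three :=
  match x, y with
  | one3, _ | _, one3 => one3
  | half3, _ | _, half3 => half3
  | _, _ => zero3
  end.
Definition imp3 (x y : three) : three :=
  match x, y with
  | zero3, _ | _, one3 | half3, half3 => one3
  | one3, y => y
  | half3, zero3 => half3
  end.

Local Ltac three_cases :=
  intros; repeat match goal with x : three |- _ => destruct x end; simpl; try reflexivity.

Definition NM3 : NMAlgebra := {|
  nm_car := three; nm_meet := meet3; nm_join := join3; nm_conj := conj3; nm_imp := imp3;
  nm_bot := zero3; nm_top := one3;
  nm_meetA := ltac:(three_cases); nm_joinA := ltac:(three_cases);
  nm_meetC := ltac:(three_cases); nm_joinC := ltac:(three_cases);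
  nm_meetJ := ltac:(three_cases); nm_joinM := ltac:(three_cases);
  nm_bot_le := ltac:(three_cases); nm_le_top := ltac:(three_cases);
  nm_conjA := ltac:(three_cases); nm_conjC := ltac:(three_cases);
  nm_conj1 := ltac:(three_cases); nm_resid := ltac:(three_cases; split; congruence);
  nm_prelin := ltac:(three_cases); nm_nm := ltac:(three_cases);
  nm_invol := ltac:(three_cases) |}.

Lemma conj3_eq1 x y : conj3 x y = one3 <-> x = one3 /\ y = one3.
Proof. by case: x; case: y; split=> // -[]. Qed.

Lemma le3_eq1 (x y : NM3) : x ⊑ y -> x = one3 -> y = one3.
Proof. by move=> + hx; rewrite hx /nm_le; case: y. Qed.

Definition nm_lit_base (A : NMAlgebra) (k : three) (x : A) : A :=
  match k with
  | zero3 => ¬ x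
  | half3 => (x ⇒ ¬ x) ⊓ (¬ x ⇒ x)
  | one3 => x
  end.

Definition nm_lit (A : NMAlgebra) (k : three) (x : A) : A :=
  nm_lit_base k x ⊙ nm_lit_base k x.

Lemma nm_idem_lit_eq0 (A : NMAlgebra) (w x : A) :
  nm_idem w -> (forall k, w ⊙ nm_lit k x = nm_bot A) -> w = nm_bot A.
Proof.
move=> hw hlit.
set r := nm_lit_base half3 x.
have hr : w ⊑ r.
  apply/nm_lexI; split.
    by rewrite /nm_neg nm_imp_curry; apply/nm_le_neg; apply: hlit one3.
  by rewrite -{2}(nm_negK x) /nm_neg nm_imp_curry; apply/nm_le_neg; apply: hlit zero3.
have hrr : w ⊑ ¬ (r ⊙ r) by apply/nm_le_neg; apply: hlit half3.
apply: nm_le_anti _ (nm_le0x _); rewrite -hw -(nm_conjN (r ⊙ r)).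
by apply: nm_conj_mono => //; rewrite -hw; apply: nm_conj_mono.
Qed.

Section Localization.
Variables (A : NMAlgebra) (e : A).
Hypothesis he : nm_idem e.
Local Notation "⊥" := (nm_bot A).
Local Notation "⊤" := (nm_top A).
Implicit Types x y : A.

Lemma loc_conjK x : e ⊙ (e ⊙ x) = e ⊙ x. Proof. by rewrite nm_conjA he. Qed.

Lemma loc_conj x y : e ⊙ (x ⊙ y) = (e ⊙ x) ⊙ (e ⊙ y).
Proof. by rewrite nm_conjACA he. Qed.

Lemma loc_imp x y : e ⊙ (x ⇒ y) = e ⊙ (e ⊙ x ⇒ e ⊙ y).
Proof.
have e_imp z : e ⊙ (e ⇒ z) = e ⊙ z.
  apply: nm_le_anti; last by apply: nm_conj_monor; apply/nm_residP; apply: nm_conj_lel.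
  by rewrite -{1}he -nm_conjA; apply: nm_conj_monor; apply: nm_modus_ponens.
have imp_loc : e ⊙ x ⇒ y = e ⊙ x ⇒ e ⊙ y.
  apply: nm_le_anti; last by apply: nm_imp_monor; apply: nm_conj_ler.
  apply/nm_residP; rewrite -{2}(loc_conjK x) nm_conjA (nm_conjC _ e) -nm_conjA.
  by apply: nm_conj_monor; rewrite nm_conjC; apply: nm_modus_ponens.
by rewrite -e_imp nm_imp_curry imp_loc.
Qed.

Lemma loc_neg x y : e ⊙ x = e ⊙ y -> e ⊙ ¬ x = e ⊙ ¬ y.
Proof. by move=> h; rewrite /nm_neg loc_imp h -loc_imp. Qed.

Lemma loc_congr_conj x x' y y' :
  e ⊙ x = e ⊙ x' -> e ⊙ y = e ⊙ y' -> e ⊙ (x ⊙ y) = e ⊙ (x' ⊙ y').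
Proof. by move=> hx hy; rewrite !loc_conj hx hy. Qed.

Lemma loc_congr_meet x x' y y' :
  e ⊙ x = e ⊙ x' -> e ⊙ y = e ⊙ y' -> e ⊙ (x ⊓ y) = e ⊙ (x' ⊓ y').
Proof. by move=> hx hy; rewrite !nm_conjIr hx hy. Qed.

Lemma loc_congr_imp x x' y y' :
  e ⊙ x = e ⊙ x' -> e ⊙ y = e ⊙ y' -> e ⊙ (x ⇒ y) = e ⊙ (x' ⇒ y').
Proof. by move=> hx hy; rewrite loc_imp hx hy -loc_imp. Qed.

(* After localization at [e], the value of [x] is the top [e], the bottom [⊥], or a fixpoint
   of the localized negation. *)
Definition loc_val (k : three) x : Prop :=
  match k with
  | zero3 => e ⊙ x = ⊥
  | half3 => e ⊙ x = e ⊙ ¬ x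
  | one3 => e ⊙ x = e
  end.

Definition loc_rep (k : three) x : A :=
  match k with zero3 => ⊥ | half3 => x | one3 => ⊤ end.

Lemma loc_valW k x y : e ⊙ x = e ⊙ y -> loc_val k x -> loc_val k y.
Proof.
by case: k => /= h; rewrite -h // => hx; rewrite hx; apply: loc_neg.
Qed.

Lemma loc_val_rep k x : loc_val k x -> e ⊙ x = e ⊙ loc_rep k x.
Proof. by case: k => /= ->; rewrite ?nm_conj1 ?nm_conj0. Qed.

Lemma loc_half_le x y : loc_val half3 x -> loc_val half3 y -> e ⊙ x ⊑ y.
Proof.
move=> /= hx hy.
rewrite -(nm_conj1 (e ⊙ x)) -(nm_prelin x y) nm_conjDr; apply: nm_leUx.
  by rewrite -nm_conjA; apply: nm_le_trans (nm_conj_ler _ _) _; apply: nm_modus_ponens.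
rewrite {1}hx nm_contra -nm_conjA; apply: nm_le_trans (nm_conj_monor _ (nm_modus_ponens _ _)) _.
by rewrite -hy; apply: nm_conj_ler.
Qed.

Lemma loc_half_eq x y : loc_val half3 x -> loc_val half3 y -> e ⊙ x = e ⊙ y.
Proof.
move=> hx hy; apply: nm_le_anti.
  by rewrite -loc_conjK; apply: nm_conj_monor; apply: loc_half_le.
by rewrite -(loc_conjK y); apply: nm_conj_monor; apply: loc_half_le.
Qed.

Lemma loc_val_lit k x : e ⊑ nm_lit k x -> loc_val k x.
Proof.
move=> /nm_le_trans /(_ (nm_conj_lel _ _)); case: k => /= h.
- exact/nm_le_neg.
- case/nm_lexI: h => h1 h2; apply: nm_le_anti.
    by rewrite -loc_conjK; apply: nm_conj_monor; apply/nm_residP.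
  by rewrite -(loc_conjK (¬ x)); apply: nm_conj_monor; apply/nm_residP.
- exact/nm_idem_leP.
Qed.

Lemma loc_val_conj ka kb x y :
  loc_val ka x -> loc_val kb y -> loc_val (conj3 ka kb) (x ⊙ y).
Proof.
case: ka => hx; case: kb => hy /=.
- by rewrite (loc_congr_conj (loc_val_rep hx) (erefl _)) /= nm_conj0l nm_conj0.
- by rewrite (loc_congr_conj (loc_val_rep hx) (erefl _)) /= nm_conj0l nm_conj0.
- by rewrite (loc_congr_conj (loc_val_rep hx) (erefl _)) /= nm_conj0l nm_conj0.
- by rewrite (loc_congr_conj (erefl _) (loc_val_rep hy)) /= !nm_conj0.
- by rewrite loc_conj -(loc_half_eq hx hy) {2}hx -loc_conj nm_conjN nm_conj0.
- by apply: loc_valW hx; rewrite (loc_congr_conj (erefl _) (loc_val_rep hy)) /= nm_conj1.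
- by rewrite (loc_congr_conj (erefl _) (loc_val_rep hy)) /= !nm_conj0.
- by apply: loc_valW hy; rewrite (loc_congr_conj (loc_val_rep hx) (erefl _)) /= nm_conj1l.
- by apply: loc_valW hy; rewrite (loc_congr_conj (loc_val_rep hx) (erefl _)) /= nm_conj1l.
Qed.

Lemma loc_val_meet ka kb x y :
  loc_val ka x -> loc_val kb y -> loc_val (meet3 ka kb) (x ⊓ y).
Proof.
case: ka => hx; case: kb => hy /=.
- by rewrite (loc_congr_meet (loc_val_rep hx) (erefl _)) /= nm_bot_le nm_conj0.
- by rewrite (loc_congr_meet (loc_val_rep hx) (erefl _)) /= nm_bot_le nm_conj0.
- by rewrite (loc_congr_meet (loc_val_rep hx) (erefl _)) /= nm_bot_le nm_conj0.
- by rewrite (loc_congr_meet (erefl _) (loc_val_rep hy)) /= nm_meet0r nm_conj0.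
- by apply: loc_valW (hx); rewrite nm_conjIr -(loc_half_eq hx hy) nm_meetxx.
- by apply: loc_valW hx; rewrite (loc_congr_meet (erefl _) (loc_val_rep hy)) /= nm_le_top.
- by rewrite (loc_congr_meet (erefl _) (loc_val_rep hy)) /= nm_meet0r nm_conj0.
- by apply: loc_valW hy; rewrite (loc_congr_meet (loc_val_rep hx) (erefl _)) /= nm_meet1l.
- by apply: loc_valW hy; rewrite (loc_congr_meet (loc_val_rep hx) (erefl _)) /= nm_meet1l.
Qed.

Lemma loc_val_imp ka kb x y :
  loc_val ka x -> loc_val kb y -> loc_val (imp3 ka kb) (x ⇒ y).
Proof.
case: ka => hx; case: kb => hy /=.
- by rewrite (loc_congr_imp (loc_val_rep hx) (erefl _)) /= nm_imp0l nm_conj1.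
- by rewrite (loc_congr_imp (loc_val_rep hx) (erefl _)) /= nm_imp0l nm_conj1.
- by rewrite (loc_congr_imp (loc_val_rep hx) (erefl _)) /= nm_imp0l nm_conj1.
- apply: (@loc_valW half3 (¬ x)); first by rewrite (loc_congr_imp (erefl _) (loc_val_rep hy)).
  by rewrite /= nm_negK -hx.
- by rewrite loc_imp -(loc_half_eq hx hy) nm_impxx nm_conj1.
- by rewrite (loc_congr_imp (erefl _) (loc_val_rep hy)) /= nm_imp1r nm_conj1.
- by apply: loc_valW hy; rewrite (loc_congr_imp (loc_val_rep hx) (erefl _)) /= nm_imp1l.
- by apply: loc_valW hy; rewrite (loc_congr_imp (loc_val_rep hx) (erefl _)) /= nm_imp1l.
- by rewrite (loc_congr_imp (erefl _) (loc_val_rep hy)) /= nm_imp1r nm_conj1.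
Qed.

End Localization.

Section PointForms.
Variable n : nat.
Implicit Types (nu mu : 'I_n -> three) (t : nmform n).

Definition lit_base_form (i : 'I_n) (k : three) : nmform n :=
  match k with
  | zero3 => FNeg (FVar i)
  | half3 => FIff (FVar i) (FNeg (FVar i))
  | one3 => FVar i
  end.

Definition lit_form i k := FConj (lit_base_form i k) (lit_base_form i k).

Definition prod_form (l : seq 'I_n) nu : nmform n :=
  foldr (fun i acc => FConj (lit_form i (nu i)) acc) (FImp FBot FBot) l.

Definition point_form nu := prod_form (enum 'I_n) nu.

Definition ev3 nu t : three := evalA (A := NM3) nu t.

Lemma evalA_lit_form (A : NMAlgebra) (v : 'I_n -> A) i k :
  evalA v (lit_form i k) = nm_lit k (v i).
Proof. by case: k. Qed.

Lemma eq_evalA (A : NMAlgebra) (v v' : 'I_n -> A) t : v =1 v' -> evalA v t = evalA v' t.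
Proof. by move=> h; elim: t => //= [a -> b -> | a -> b -> | a -> b ->]. Qed.

Lemma eq_prod_form l nu nu' : {in l, nu =1 nu'} -> prod_form l nu = prod_form l nu'.
Proof.
elim: l => //= j l IH h; rewrite h ?mem_head // IH // => i hi.
by apply: h; rewrite in_cons hi orbT.
Qed.

Lemma eq_point_form nu nu' : nu =1 nu' -> point_form nu = point_form nu'.
Proof. by move=> h; apply: eq_prod_form => i _. Qed.

Lemma idem_prod_form (A : NMAlgebra) (v : 'I_n -> A) l nu :
  nm_idem (evalA v (prod_form l nu)).
Proof.
elim: l => [|j l IH] /=; first by rewrite nm_imp0l; apply: nm_idem1.
by apply: nm_idem_conj => //; apply: nm_idem_sq.
Qed.

Lemma prod_form_le_lit (A : NMAlgebra) (v : 'I_n -> A) l nu i :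
  i \in l -> evalA v (prod_form l nu) ⊑ nm_lit (nu i) (v i).
Proof.
rewrite -evalA_lit_form; elim: l => // j l IH; rewrite in_cons => /orP [/eqP -> | hi] /=.
  exact: nm_conj_lel.
exact: nm_le_trans (nm_conj_ler _ _) (IH hi).
Qed.

Lemma loc_val_point_form (A : NMAlgebra) (v : 'I_n -> A) nu t :
  loc_val (evalA v (point_form nu)) (ev3 nu t) (evalA v t).
Proof.
have he := idem_prod_form v (enum 'I_n) nu.
elim: t => [i | | a iha b ihb | a iha b ihb | a iha b ihb]; rewrite /ev3 /=.
- by apply: (loc_val_lit he); apply: prod_form_le_lit; rewrite mem_enum.
- exact: nm_conj0.
- exact: loc_val_conj.
- exact: loc_val_meet.
- exact: loc_val_imp.
Qed.

Lemma ev3_lit_form nu i k : ev3 nu (lit_form i k) = one3 <-> nu i = k.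
Proof. by rewrite /ev3; case: k; rewrite /= /nm_neg /=; case: (nu i). Qed.

Lemma ev3_prod_form nu l mu : ev3 nu (prod_form l mu) = one3 <-> {in l, nu =1 mu}.
Proof.
elim: l => [|j l IH] /=; first by split.
rewrite /ev3 /= -/(ev3 nu _) -/(ev3 nu _) conj3_eq1 ev3_lit_form IH; split.
  by case=> hj hl i; rewrite in_cons => /orP [/eqP -> | /hl].
by move=> h; split=> [|i hi]; apply: h; rewrite in_cons ?eqxx ?hi ?orbT.
Qed.

Lemma ev3_point_form nu mu : ev3 nu (point_form mu) = one3 <-> nu =1 mu.
Proof.
rewrite ev3_prod_form; split=> h i; last by [].
by apply: h; rewrite mem_enum.
Qed.

End PointForms.

Section FreeAlgebra.
Variable n : nat.
Implicit Types (nu mu : 'I_n -> three) (a b g h t : nmform n).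

Lemma fequiv_evalA a b (A : NMAlgebra) (v : 'I_n -> A) : fequiv a b -> evalA v a = evalA v b.
Proof. by move/(_ A v)/nm_iff_eq1. Qed.

Lemma evalA_fequiv a b :
  (forall (A : NMAlgebra) (v : 'I_n -> A), evalA v a = evalA v b) -> fequiv a b.
Proof. by move=> h A v; apply/nm_iff_eq1; apply: h. Qed.

Lemma fle_evalA a b (A : NMAlgebra) (v : 'I_n -> A) : fle a b -> evalA v a ⊑ evalA v b.
Proof. exact: fequiv_evalA. Qed.

Lemma evalA_fle a b :
  (forall (A : NMAlgebra) (v : 'I_n -> A), evalA v a ⊑ evalA v b) -> fle a b.
Proof. by move=> h; apply: evalA_fequiv => A v; apply: h. Qed.

Lemma fle_anti a b : fle a b -> fle b a -> fequiv a b.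
Proof. by move=> hab hba; apply: evalA_fequiv => A v; apply: nm_le_anti; apply: fle_evalA. Qed.

Lemma fequiv_sym a b : fequiv a b -> fequiv b a.
Proof. by move=> h; apply: evalA_fequiv => A v; rewrite (fequiv_evalA v h). Qed.

Lemma fle_fequiv_trans a b c : fle a b -> fequiv c b -> fle a c.
Proof.
by move=> hab hcb; apply: evalA_fle => A v; rewrite (fequiv_evalA v hcb); apply: fle_evalA.
Qed.

Lemma point_form_le nu t : ev3 nu t = one3 -> fle (point_form nu) t.
Proof.
move=> ht; apply: evalA_fle => A v.
have he := idem_prod_form v (enum 'I_n) nu.
by have := loc_val_point_form v nu t; rewrite ht => /(nm_idem_leP _ he).
Qed.

(* Split [w] along the three literals of the next variable, by [nm_idem_lit_eq0]. *)
Lemma prod_form_cover (A : NMAlgebra) (v : 'I_n -> A) l (w : A) :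
  uniq l -> nm_idem w -> (forall nu, evalA v (prod_form l nu) ⊙ w = nm_bot A) -> w = nm_bot A.
Proof.
elim: l w => [|i l IH] w /=.
  by move=> _ _ /(_ (fun _ => one3)); rewrite nm_imp0l nm_conj1l.
case/andP => il ul hw hprod; apply: IH => // nu.
set w' := evalA v (prod_form l nu) ⊙ w.
have hw' : nm_idem w' by apply: nm_idem_conj => //; apply: idem_prod_form.
apply: (nm_idem_lit_eq0 (x := v i) hw') => k.
have := hprod (fun j => if j == i then k else nu j); rewrite /= eqxx.
rewrite (@eq_prod_form _ _ _ nu) => [|j jl]; last by case: eqP => // ji; rewrite -ji jl in il.
by move=> h; rewrite -evalA_lit_form nm_conjC nm_conjA; apply: h.
Qed.

Lemma nonzero_idempotent_point g :
  Defs.idempotent g -> ~ fequiv g FBot -> exists nu, ev3 nu g = one3.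
Proof.
move=> gid g_neq0; apply: NNPP => no_point; apply: g_neq0; apply: evalA_fequiv => A v /=.
have hg : nm_idem (evalA v g) by apply: (fequiv_evalA v gid).
apply: (prod_form_cover (v := v) (l := enum 'I_n)) => // [|nu]; first exact: enum_uniq.
have he := idem_prod_form v (enum 'I_n) nu.
have := loc_val_point_form v nu g; rewrite -/(point_form nu).
case E: (ev3 nu g) => /= hloc //; last by case: no_point; exists nu.
by rewrite -hg loc_conj // {2}hloc -loc_conj // nm_conjN nm_conj0.
Qed.

Lemma fle_ev3 nu a b : fle a b -> ev3 nu a = one3 -> ev3 nu b = one3.
Proof. by move/(fle_evalA (A := NM3) nu); apply: le3_eq1. Qed.

Lemma fle_FJoinl a b : fle a (FJoin a b).
Proof. by apply: evalA_fle => A v; apply: nm_le_impjoin. Qed.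

Lemma fle_FJoinr a b : fle b (FJoin a b).
Proof. by apply: evalA_fle => A v /=; rewrite nm_meetC; apply: nm_le_impjoin. Qed.

Lemma ev3_FJoin nu a b : ev3 nu (FJoin a b) = one3 -> ev3 nu a = one3 \/ ev3 nu b = one3.
Proof. by rewrite /ev3 /=; case: (evalA (A := NM3) nu a); case: (evalA _ b); auto. Qed.

Lemma point_form_idem nu : Defs.idempotent (point_form nu).
Proof. by apply: evalA_fequiv => A v; apply: idem_prod_form. Qed.

Lemma point_form_join_irreducible nu : join_irreducible (point_form nu).
Proof.
have hnu : ev3 nu (point_form nu) = one3 by apply/ev3_point_form.
split=> [/(fequiv_evalA nu (A := NM3)) | a b /[dup] hab /(fequiv_evalA nu (A := NM3)) hab3].
  by rewrite -/(ev3 _ _) hnu.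
have /ev3_FJoin [ha | hb] : ev3 nu (FJoin a b) = one3 by rewrite /ev3 -hab3.
  by left; apply: fle_anti (point_form_le ha) (fle_fequiv_trans (fle_FJoinl a b) hab).
by right; apply: fle_anti (point_form_le hb) (fle_fequiv_trans (fle_FJoinr a b) hab).
Qed.

Lemma point_form_minimal nu g : idem_ji g -> fle g (point_form nu) -> fequiv g (point_form nu).
Proof.
move=> [gid [g_neq0 _]] g_le.
have [mu hmu] := nonzero_idempotent_point gid g_neq0.
have /ev3_point_form mu_nu := fle_ev3 g_le hmu.
have hnu : ev3 nu g = one3 by rewrite /ev3 -(eq_evalA (A := NM3) _ mu_nu).
exact: fle_anti g_le (point_form_le hnu).
Qed.

Lemma point_form_inj nu mu : fequiv (point_form nu) (point_form mu) -> nu =1 mu.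
Proof.
move/(fequiv_evalA nu (A := NM3)) => h; apply/ev3_point_form.
by rewrite /ev3 -h; apply/ev3_point_form.
Qed.

Lemma point_form_min_idem_ji nu : min_idem_ji (point_form nu).
Proof.
split; last exact: point_form_minimal.
by split; [apply: point_form_idem | apply: point_form_join_irreducible].
Qed.

End FreeAlgebra.

Local Open Scope ring_scope.

Definition rat3 (x : three) : rat :=
  match x with zero3 => 0 | half3 => 1 / 2 | one3 => 1 end.

Definition of3 (k : 'I_3) : three :=
  match val k with 0%N => zero3 | 1%N => half3 | _ => one3 end.

Definition to3 (x : three) : 'I_3 :=
  match x with zero3 => inord 0 | half3 => inord 1 | one3 => inord 2 end.

Lemma of3K : cancel of3 to3.
Proof. by case=> -[|[|[|m]]] // hm; apply: val_inj; rewrite /= inordK. Qed.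

Lemma to3K : cancel to3 of3.
Proof. by case; rewrite /of3 /= inordK. Qed.

Lemma val3_rat3 k : val3 k = rat3 (of3 k).
Proof. by case: k => -[|[|[|m]]] //= _; rewrite /val3 /=; lra. Qed.

Lemma rat3_eq1 x : rat3 x = 1 <-> x = one3.
Proof. by case: x; split => //= h; exfalso; lra. Qed.

Local Ltac rat3_cases :=
  rewrite /std_conj /std_imp /Order.min /Order.max;
  repeat match goal with
         |- context [if ?b then _ else _] => let E := fresh in destruct b eqn:E
         end;
  lra.

Lemma eq_eval3 n (v v' : 'I_n -> rat) t : v =1 v' -> eval3 v t = eval3 v' t.
Proof. by move=> h; elim: t => //= [a -> b -> | a -> b -> | a -> b ->]. Qed.

Lemma eval3_rat3 n (nu : 'I_n -> three) t : eval3 (rat3 \o nu) t = rat3 (ev3 nu t).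
Proof.
rewrite /ev3; elim: t => [i | | a iha b ihb | a iha b ihb | a iha b ihb] //=;
  rewrite ?iha ?ihb; case: (evalA _ a) => /=; case: (evalA _ b) => /=; rat3_cases.
Qed.

Lemma in_O_set n (phi : nmform n) (mu : assign n) :
  mu \in O_set phi <-> ev3 (of3 \o mu) phi = one3.
Proof.
rewrite inE -rat3_eq1 -eval3_rat3 (@eq_eval3 _ _ (rat3 \o (of3 \o mu))) => [|i].
  by split=> /eqP.
exact: val3_rat3.
Qed.

Theorem lemma4 (n : nat) (hn : (1 <= n)%N) (phi : nmform n) :
  exists f : assign n -> nmform n,
    (forall mu, mu \in O_set phi -> min_idem_ji (f mu) /\ fle (f mu) phi) /\
    (forall mu nu, mu \in O_set phi -> nu \in O_set phi ->
        fequiv (f mu) (f nu) -> mu = nu) /\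
    (forall g : nmform n, min_idem_ji g -> fle g phi ->
        exists2 mu, mu \in O_set phi & fequiv g (f mu)).
Proof.
exists (fun mu => point_form (of3 \o mu)); split; [|split].
- by move=> mu /in_O_set hmu; split; [apply: point_form_min_idem_ji | apply: point_form_le].
- move=> mu nu _ _ /point_form_inj mu_nu.
  by apply/ffunP => i; apply: (can_inj of3K); apply: mu_nu.
- move=> g [[gid [g_neq0 _]] g_min] g_le.
  have [nu hnu] := nonzero_idempotent_point gid g_neq0.
  pose mu : assign n := [ffun i => to3 (nu i)].
  have mu_nu : of3 \o mu =1 nu by move=> i; rewrite /= ffunE to3K.
  exists mu.
    by apply/in_O_set; rewrite /ev3 (eq_evalA (A := NM3) _ mu_nu); apply: fle_ev3 g_le hnu.
  rewrite /= (eq_point_form mu_nu).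
  apply: fequiv_sym; apply: g_min (point_form_le hnu).
  exact: (proj1 (point_form_min_idem_ji nu)).
Qed.
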